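(* Consider a football league with $n\ge 2$ teams in which every pair of distinct teams $i\neq j$ plays twice, once at the home ground of each team. For $i\neq j$ and $k\in\{0,1\}$, let $X_{ij1}$ be the number of goals scored by team $i$ against team $j$ in the match at $i$'s home ground and $X_{ij0}$ the number of goals scored by team $i$ against team $j$ in the match at $j$'s home ground. Suppose the $X_{ijk}$ are independent and all follow a Poisson distribution with the same mean $\lambda>0$. Then there exists a value $\lambda_0>0$ such that, when $\lambda=\lambda_0$, every match is equally likely to end in a win, a draw or a loss for any team, i.e. for each match the probabilities that the home team scores more, equally many, or fewer goals than the away team are all equal to $1/3$.
   Context: A match between team $i$ (at home) and team $j$ is a win for $i$ if $X_{ij1}>X_{ji0}$, a draw if $X_{ij1}=X_{ji0}$, and a loss for $i$ if $X_{ij1}<X_{ji0}$. *)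

From HB Require Import structures.
From mathcomp Require Import all_boot all_order all_algebra.
From mathcomp Require Import all_classical all_reals all_analysis.
Set Implicit Arguments. Unset Strict Implicit. Unset Printing Implicit Defensive.
Import Order.TTheory GRing.Theory Num.Theory.
Local Open Scope classical_set_scope.
Local Open Scope ring_scope.

(* Index (i, j, k) of the goal count X_{ijk}: goals scored by team i against
   team j, in the match at i's home ground (k = true, i.e. k = 1) or at j's
   home ground (k = false, i.e. k = 0).  Only i <> j is meaningful. *)
Definition goal_index (n : nat) := ('I_n * 'I_n * bool)%type.

Definition valid_index (n : nat) (v : goal_index n) : bool := v.1.1 != v.1.2.

Definition goals_measurable (d : measure_display) (T : measurableType d)
  (n : nat) (X : goal_index n -> T -> nat) : Prop :=
  forall v k, valid_index v -> measurable (X v @^-1` [set k]).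

(* Mutual independence of the family (X_v)_{v valid}: product rule over every
   finite subfamily of level-set events (for nat-valued random variables this
   is the usual definition of independence). *)
Definition goals_independent (R : realType) (d : measure_display)
  (T : measurableType d) (P : probability T R) (n : nat)
  (X : goal_index n -> T -> nat) : Prop :=
  forall (S : {set goal_index n}) (a : goal_index n -> nat),
    (forall v, v \in S -> valid_index v) ->
    P (\bigcap_(v in [set` S]) (X v @^-1` [set a v])) =
    (\prod_(v in S) P (X v @^-1` [set a v]))%E.

Definition goals_poisson (R : realType) (d : measure_display)
  (T : measurableType d) (P : probability T R) (n : nat)
  (X : goal_index n -> T -> nat) (lam : R) : Prop :=
  forall v k, valid_index v -> P (X v @^-1` [set k]) = (poisson_pmf lam k)%:E.

(* With independent Poisson(l) scores the probability of a draw is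
   sum_k (e^-l l^k / k!)^2 = e^(-2l) sum_k l^(2k) / (k!)^2, a continuous
   function of l which is 1 at l = 0 and below 1/3 at l = 2: there the
   termwise bound (2^k / k!)^2 <= 2 * 2^k / k! gives at most 2 e^-2 < 1/3.
   The intermediate value theorem yields l0 with draw probability 1/3.  Home
   and away scores are then independent and identically distributed, so a
   home win and a home loss are equally likely, and as the three outcomes
   partition the sample space each has probability 1/3. *)

From HB Require Import structures.
From mathcomp Require Import all_boot all_order all_algebra.
From mathcomp Require Import all_classical all_reals all_analysis.
From mathcomp Require Import ring lra zify.
Set Implicit Arguments.
Unset Strict Implicit.
Unset Printing Implicit Defensive.

Import Order.TTheory GRing.Theory Num.Theory.
Import numFieldNormedType.Exports.
Local Open Scope classical_set_scope.
Local Open Scope ring_scope.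

Lemma pow2_le_fact k : (2 ^ k <= 2 * k`!)%N.
Proof. by elim: k => [//|[//|k] IH]; rewrite expnS factS; nia. Qed.

Section SquaredFactorialSeries.
Variable R : realType.

Definition inv_sqr_fact (k : nat) : R := ((k`! ^ 2)%:R)^-1.

Definition sqr_fact_series (y : R) : R := limn (pseries inv_sqr_fact y).

Lemma inv_sqr_fact_ge0 k : 0 <= inv_sqr_fact k.
Proof. by rewrite invr_ge0. Qed.

Lemma inv_sqr_fact_le_inv_fact k : inv_sqr_fact k <= k`!%:R^-1.
Proof.
rewrite lef_pV2 ?posrE ?ltr0n ?expn_gt0 ?fact_gt0 // ler_nat.
by rewrite expnS expn1 leq_pmulr ?fact_gt0.
Qed.

Lemma pseries_diffs_ge0 (c : nat -> R) :
  (forall k, 0 <= c k) -> forall k, 0 <= pseries_diffs c k.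
Proof. by move=> c0 k; rewrite mulr_ge0. Qed.

Lemma pseries_diffs_le_inv_sqr_fact (c : nat -> R) :
  (forall k, c k <= inv_sqr_fact k) -> forall k, pseries_diffs c k <= inv_sqr_fact k.
Proof.
move=> c_le k; apply: le_trans (ler_wpM2l (ler0n _ _) (c_le k.+1)) _.
rewrite /inv_sqr_fact ler_pdivrMr ?ltr0n ?expn_gt0 ?fact_gt0 // mulrC.
by rewrite ler_pdivlMr ?ltr0n ?expn_gt0 ?fact_gt0 // -!natrM ler_nat factS; nia.
Qed.

Lemma cvgn_pseries_le_inv_fact (c : nat -> R) (K : R) : 0 <= K ->
  (forall k, 0 <= c k) -> (forall k, c k <= k`!%:R^-1) -> cvgn (pseries c K).
Proof.
move=> K0 c0 c_le; apply: (@series_le_cvg _ _ (exp_coeff K)).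
- by move=> k; rewrite mulr_ge0 ?exprn_ge0.
- by move=> k; rewrite /exp_coeff /= mulr_ge0 ?exprn_ge0 // invr_ge0.
- by move=> k; rewrite /exp_coeff /= mulrC ler_wpM2l ?exprn_ge0.
- exact: is_cvg_series_exp_coeff.
Qed.

Lemma cvgn_pseries_le_inv_sqr_fact (c : nat -> R) (K : R) : 0 <= K ->
  (forall k, 0 <= c k) -> (forall k, c k <= inv_sqr_fact k) -> cvgn (pseries c K).
Proof.
move=> K0 c0 c_le; apply: cvgn_pseries_le_inv_fact => // k.
exact: le_trans (c_le k) (inv_sqr_fact_le_inv_fact k).
Qed.

Lemma continuous_pseries_le_inv_sqr_fact (c : nat -> R) :
  (forall k, 0 <= c k) -> (forall k, c k <= inv_sqr_fact k) ->
  continuous (fun y => limn (pseries c y)).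
Proof.
move=> c0 c_le y; have K0 : 0 <= `|y| + 1 by rewrite addr_ge0.
have y_lt : `|y| < `| `|y| + 1 | by rewrite [X in _ < X]ger0_norm // ltrDl.
have c1_0 := pseries_diffs_ge0 c0; have c2_0 := pseries_diffs_ge0 c1_0.
have c1_le := pseries_diffs_le_inv_sqr_fact c_le.
have c2_le := pseries_diffs_le_inv_sqr_fact c1_le.
have [+ _] := pseries_snd_diffs (cvgn_pseries_le_inv_sqr_fact K0 c0 c_le)
  (cvgn_pseries_le_inv_sqr_fact K0 c1_0 c1_le)
  (cvgn_pseries_le_inv_sqr_fact K0 c2_0 c2_le) y_lt.
by move=> /derivable1_diffP/differentiable_continuous.
Qed.

Lemma continuous_sqr_fact_series : continuous sqr_fact_series.
Proof. exact: continuous_pseries_le_inv_sqr_fact inv_sqr_fact_ge0 (fun k => lexx _). Qed.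

Lemma cvgn_sqr_fact_series (y : R) : 0 <= y -> cvgn (pseries inv_sqr_fact y).
Proof. by move=> y0; exact: cvgn_pseries_le_inv_sqr_fact y0 inv_sqr_fact_ge0 (fun k => lexx _). Qed.

Lemma sqr_fact_series0 : sqr_fact_series 0 = 1.
Proof.
rewrite /sqr_fact_series /pseries; apply: lim_near_cst => //.
near=> m; rewrite /series /= -[m]prednK; last by near: m; exists 1%N.
rewrite big_nat_recl // big1 ?addr0; last by move=> i _; rewrite expr0n mulr0.
by rewrite /inv_sqr_fact expr0 mulr1 fact0 invr1.
Unshelve. all: by end_near. Qed.

Lemma sqr_fact_series_sqr_le (x M : R) : 0 <= x ->
  (forall k, x ^+ k / k`!%:R <= M) -> sqr_fact_series (x ^+ 2) <= M * expR x.
Proof.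
move=> x0 le_M; have M0 : 0 <= M by apply: le_trans (le_M 0%N); rewrite divr_ge0.
rewrite /sqr_fact_series -[M * _]/(M *: _) /expR -lim_seriesZ;
  last exact: is_cvg_series_exp_coeff.
apply: ler_lim.
- exact/cvgn_sqr_fact_series/exprn_ge0.
- by apply: is_cvg_seriesZ; exact: is_cvg_series_exp_coeff.
apply: nearW => n; rewrite /series /=; apply: ler_sum => k _.
rewrite /exp_coeff /= !fctE.
have xk0 : 0 <= x ^+ k / k`!%:R by rewrite divr_ge0 ?exprn_ge0.
have -> : inv_sqr_fact k * (x ^+ 2) ^+ k = (x ^+ k / k`!%:R) ^+ 2.
  by rewrite /inv_sqr_fact natrX -exprVn -exprM mulnC exprM expr2 expr2; ring.
by rewrite -[M *: _]/(M * _) expr2 ler_wpM2r.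
Qed.
End SquaredFactorialSeries.

Section PoissonDrawProbability.
Variable R : realType.

Definition poisson_draw_prob (l : R) : R :=
  expR (- l) ^+ 2 * sqr_fact_series (l ^+ 2).

Lemma poisson_pmf_sqr_series (l : R) : 0 < l ->
  (\sum_(b <oo) (poisson_pmf l b * poisson_pmf l b)%:E)%E = (poisson_draw_prob l)%:E.
Proof.
move=> l0; have pmf_sqrE : (fun b => poisson_pmf l b * poisson_pmf l b) =
    expR (- l) ^+ 2 *: (fun b => inv_sqr_fact R b * (l ^+ 2) ^+ b).
  apply/funext => b; rewrite /poisson_pmf l0 /inv_sqr_fact !fctE /= natrX -exprVn.
  by rewrite -exprM mulnC exprM -[_ *: _]/(_ * _); ring.
have cvg_sqr := cvgn_sqr_fact_series (exprn_ge0 2 (ltW l0)).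
rewrite /poisson_draw_prob -[_ * _]/(_ *: _) -lim_seriesZ // -EFin_lim;
  last exact: is_cvg_seriesZ.
rewrite -pmf_sqrE; apply: congr_lim; apply/funext => m /=.
by rewrite /series /= sumEFin.
Qed.

Lemma continuous_poisson_draw_prob : continuous poisson_draw_prob.
Proof.
move=> l; change {for l, continuous
  ((fun l => expR (- l) ^+ 2) \* (fun l => sqr_fact_series (l ^+ 2)))}.
apply: continuousM.
- apply: (@continuous_comp _ _ _ (fun l : R => expR (- l)) (fun y => y ^+ 2));
    last exact: exprn_continuous.
  by apply: continuous_comp; [exact: opp_continuous | exact: continuous_expR].
- apply: (@continuous_comp _ _ _ (fun l : R => l ^+ 2) (@sqr_fact_series R));
    [exact: exprn_continuous | exact: continuous_sqr_fact_series].
Qed.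

Lemma poisson_draw_prob0 : poisson_draw_prob 0 = 1.
Proof.
by rewrite /poisson_draw_prob oppr0 expR0 expr1n expr0n sqr_fact_series0 mulr1.
Qed.

Lemma exp2_gt6 : 6 < expR 2 :> R.
Proof.
have -> : 2 = 10%:R * 5^-1 :> R by lra.
rewrite expRM_natl; apply: (@lt_le_trans _ _ ((1 + 5^-1) ^+ 10)).
  by rewrite !exprS expr0; lra.
apply: lerXn2r; rewrite ?nnegrE ?expR_ge0 ?expR_ge1Dx //; lra.
Qed.

Lemma poisson_draw_prob2_lt : poisson_draw_prob 2 < 3^-1.
Proof.
have e2_gt6 := exp2_gt6; have e2_gt0 : 0 < expR 2 :> R := expR_gt0 2.
have le_H4 : sqr_fact_series (2 ^+ 2 : R) <= 2 * expR 2.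
  apply: sqr_fact_series_sqr_le => // k.
  by rewrite ler_pdivrMr ?ltr0n ?fact_gt0 // -natrX -natrM ler_nat pow2_le_fact.
rewrite /poisson_draw_prob expRN exprVn mulrC ltr_pdivrMr ?exprn_gt0 // expr2.
by nra.
Qed.

Lemma exists_poisson_draw_prob_third :
  exists2 l : R, 0 < l & poisson_draw_prob l = 3^-1.
Proof.
have [c] : exists2 c, c \in `[0, 2] & poisson_draw_prob c = 3^-1.
  apply: IVT; first lra.
    exact/continuous_subspaceT/continuous_poisson_draw_prob.
  have := poisson_draw_prob2_lt; rewrite poisson_draw_prob0 ge_min le_max => ?.
  by apply/andP; split; apply/orP; [right|left]; lra.
rewrite in_itv /= => /andP[c0 _] dc; exists c => //.
rewrite lt_neqAle c0 andbT; apply: contra_eqN dc => /eqP <-.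
by rewrite poisson_draw_prob0; lra.
Qed.
End PoissonDrawProbability.

Section PairEvents.
Variables (R : realType) (d : measure_display) (T : measurableType d).
Variables (P : probability T R) (U V : T -> nat) (p : nat -> R).
Hypothesis mU : forall a, measurable (U @^-1` [set a]).
Hypothesis mV : forall a, measurable (V @^-1` [set a]).

Let level (a b : nat) := U @^-1` [set a] `&` V @^-1` [set b].

Let measurable_level a b : measurable (level a b).
Proof. exact: measurableI. Qed.

Let ltn_eventE : [set t | (U t < V t)%N] =
  \bigcup_b \bigcup_(a in [set a | (a < b)%N]) level a b.
Proof.
apply/seteqP; split => [t /= ltUV | t [b _ [a /= ltab [/= -> ->]]]] //.
by exists (V t) => //; exists (U t).
Qed.

Let eq_eventE : [set t | U t = V t] = \bigcup_b level b b.
Proof.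
apply/seteqP; split => [t /= eqUV | t [b _ [/= -> ->]]] //.
by exists (V t) => //; rewrite /level /= eqUV.
Qed.

Lemma measurable_ltn_event : measurable [set t | (U t < V t)%N].
Proof.
rewrite ltn_eventE; apply: bigcupT_measurable => b.
by apply: bigcup_measurable => a _.
Qed.

Lemma measurable_eq_event : measurable [set t | U t = V t].
Proof. by rewrite eq_eventE; exact: bigcupT_measurable. Qed.

Hypothesis indepUV : forall a b,
  P (U @^-1` [set a] `&` V @^-1` [set b]) = (p a * p b)%:E.

Lemma prob_ltn_event : P [set t | (U t < V t)%N] =
  (\sum_(b <oo) \sum_(a <oo | a \in [set a | (a < b)%N]) (p a * p b)%:E)%E.
Proof.
rewrite ltn_eventE measure_semi_bigcup //.
- apply: eq_eseriesr => b _; rewrite measure_bigcup //.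
    by apply: eq_eseriesr => a _; exact: indepUV.
  by move=> a a' _ _ [t [[/= <- _] [/= -> _]]].
- by move=> b; exact: bigcup_measurable.
- by move=> b b' _ _ [t [[a _ [_ /= <-]] [a' _ [_ /= ->]]]].
- by apply: bigcupT_measurable => b; exact: bigcup_measurable.
Qed.

Lemma prob_eq_event : P [set t | U t = V t] = (\sum_(b <oo) (p b * p b)%:E)%E.
Proof.
rewrite eq_eventE measure_semi_bigcup //.
- by apply: eq_eseriesr => b _; exact: indepUV.
- by move=> b b' _ _ [t [[_ /= <-] [_ /= ->]]].
- exact: bigcupT_measurable.
Qed.
End PairEvents.

Section IidPair.
Variables (R : realType) (d : measure_display) (T : measurableType d).
Variables (P : probability T R) (U V : T -> nat) (p : nat -> R).
Hypothesis mU : forall a, measurable (U @^-1` [set a]).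
Hypothesis mV : forall a, measurable (V @^-1` [set a]).
Hypothesis indepUV : forall a b,
  P (U @^-1` [set a] `&` V @^-1` [set b]) = (p a * p b)%:E.

Lemma prob_ltn_event_sym : P [set t | (V t < U t)%N] = P [set t | (U t < V t)%N].
Proof.
have indepVU a b : P (V @^-1` [set a] `&` U @^-1` [set b]) = (p a * p b)%:E.
  by rewrite setIC indepUV mulrC.
by rewrite (prob_ltn_event mV mU indepVU) (prob_ltn_event mU mV indepUV).
Qed.

Lemma prob_trichotomy : (P [set t | (V t < U t)%N] + P [set t | U t = V t]
  + P [set t | (U t < V t)%N] = 1)%E.
Proof.
have mVU := measurable_ltn_event mV mU; have mUV := measurable_ltn_event mU mV.
have mUeqV := measurable_eq_event mU mV.
rewrite -(probability_setT P) -!measureU //; last 2 first.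
- by apply/seteqP; split => t //=; lia.
- by apply/seteqP; split => t //=; lia.
- congr (P _); apply/seteqP; split => t //= _.
  by case: (ltngtP (U t) (V t)); [right | left; left | left; right].
- exact: measurableU.
Qed.

Lemma prob_outcomes_third : (\sum_(b <oo) (p b * p b)%:E)%E = (3^-1)%:E ->
  [/\ P [set t | (V t < U t)%N] = (3^-1)%:E, P [set t | U t = V t] = (3^-1)%:E
    & P [set t | (U t < V t)%N] = (3^-1)%:E].
Proof.
move=> draw_third; rewrite (prob_eq_event mU mV indepUV) draw_third.
have := prob_trichotomy; rewrite (prob_eq_event mU mV indepUV) draw_third.
rewrite -prob_ltn_event_sym -(fineK (fin_num_measure P _ (measurable_ltn_event mV mU))).
set x := fine _; rewrite -!EFinD => /eqP; rewrite eqe => /eqP sum1.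
by have -> : x = 3^-1 by lra.
Qed.
End IidPair.

Lemma goals_independent_pair (R : realType) (d : measure_display)
    (T : measurableType d) (P : probability T R) (n : nat)
    (X : goal_index n -> T -> nat) (v w : goal_index n) (a b : nat) :
  goals_independent P X -> valid_index v -> valid_index w -> v != w ->
  P (X v @^-1` [set a] `&` X w @^-1` [set b]) =
  (P (X v @^-1` [set a]) * P (X w @^-1` [set b]))%E.
Proof.
move=> indepX vv vw vw_neq.
have := indepX [set v; w]%SET (fun u => if u == v then a else b).
rewrite big_setU1 ?inE //= big_set1 eqxx eq_sym (negbTE vw_neq).
have -> : \bigcap_(u in [set` [set v; w]%SET]) X u @^-1` [set if u == v then a else b]
    = X v @^-1` [set a] `&` X w @^-1` [set b].
  apply/seteqP; split => [t Xt | t [Xva Xwb] u].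
  - split; [have := Xt v | have := Xt w];
      by rewrite /= !inE eqxx ?orbT ?(eq_sym w) ?(negbTE vw_neq) => /(_ isT).
  - by rewrite /= !inE => /orP[] /eqP ->; rewrite ?eqxx // eq_sym (negbTE vw_neq).
by apply=> u; rewrite !inE => /orP[] /eqP ->.
Qed.

Theorem theorem1 (R : realType) :
  exists lam0 : R, 0 < lam0 /\
  forall (n : nat), (2 <= n)%N ->
  forall (d : measure_display) (T : measurableType d) (P : probability T R)
         (X : goal_index n -> T -> nat),
    goals_measurable X ->
    goals_independent P X ->
    goals_poisson P X lam0 ->
    forall i j : 'I_n, i != j ->
      [/\ P [set t | (X (j, i, false) t < X (i, j, true) t)%N] = (3%:R^-1)%:E,
          P [set t | X (i, j, true) t = X (j, i, false) t] = (3%:R^-1)%:E &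
          P [set t | (X (i, j, true) t < X (j, i, false) t)%N] = (3%:R^-1)%:E].
Proof.
have [l l0 draw_third] := @exists_poisson_draw_prob_third R.
exists l; split => // n _ d T P X mX indepX poisX i j ij.
have home_valid : valid_index (i, j, true) by [].
have away_valid : valid_index (j, i, false) by rewrite /valid_index eq_sym.
have home_away : (i, j, true) != (j, i, false) by rewrite xpair_eqE andbF.
have m_home a : measurable (X (i, j, true) @^-1` [set a]) by exact: mX.
have m_away a : measurable (X (j, i, false) @^-1` [set a]) by exact: mX.
apply: (prob_outcomes_third m_home m_away).
- by move=> a b; rewrite goals_independent_pair // !poisX // EFinM.
- by rewrite poisson_pmf_sqr_series // draw_third.
Qed.
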